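(* If $n \ge m \ge 2$, then $\mathrm{sg_e}(K_{n,m}) \ge n$. Moreover, $\mathrm{sg_e}(K_{n,n}) \ge n+1$ for every $n\ge 2$.
   Context: All graphs are finite, simple and connected. A set $S \subseteq V(G)$ is a strong edge geodetic set of $G$ if one can assign to every unordered pair $\{u,v\}$ of distinct vertices of $S$ either one shortest $u,v$-path $P_{uv}$ in $G$ or no path, in such a way that every edge of $G$ lies on at least one of the assigned paths. The strong edge geodetic number $\mathrm{sg_e}(G)$ is the minimum cardinality of a strong edge geodetic set of $G$. $K_{n,m}$ denotes the complete bipartite graph with parts of sizes $n$ and $m$. *)

From mathcomp Require Import all_boot all_order.
From Stdlib Require Import ClassicalEpsilon.
Set Implicit Arguments. Unset Strict Implicit. Unset Printing Implicit Defensive.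

Section Graph.
Variables (T : finType) (e : rel T).

Definition walk (u v : T) (p : seq T) : bool := path e u p && (last u p == v).

Definition shortest_path (u v : T) (p : seq T) : Prop :=
  walk u v p /\ forall q, walk u v q -> size p <= size q.

Definition edge_on (x y u : T) (p : seq T) : bool :=
  has (fun ab => (ab == (x, y)) || (ab == (y, x))) (zip (u :: p) p).

(* Unordered pairs {u,v} of distinct vertices are represented by the ordered
   pair (u,v) with enum_rank u < enum_rank v.  An assignment gives to each such
   pair either one shortest u,v-path (Some p) or no path (None). *)
Definition strong_edge_geodetic (S : {set T}) : Prop :=
  exists f : T -> T -> option (seq T),
    (forall u v p, u \in S -> v \in S -> enum_rank u < enum_rank v ->
       f u v = Some p -> shortest_path u v p) /\
    (forall x y, e x y -> exists u v p,
       [/\ u \in S, v \in S, enum_rank u < enum_rank v,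
           f u v = Some p & edge_on x y u p]).

Definition strong_edge_geodeticb (S : {set T}) : bool :=
  if excluded_middle_informative (strong_edge_geodetic S) then true else false.

Definition sg_e : nat :=
  #|[arg min_(S < [set: T] | strong_edge_geodeticb S) #|S|]|.
End Graph.

Definition Kbip (n m : nat) : rel ('I_n + 'I_m)%type :=
  fun x y => match x, y with
             | inl _, inr _ | inr _, inl _ => true
             | _, _ => false
             end.
Arguments Kbip : clear implicits.

(** Let [S] be a strong edge geodetic set of a complete bipartite graph with
    sides [P] and [B], and suppose some [x] in [P] lies outside [S].  Geodesics
    have length at most 2, so an edge [xy] with [y] in [B] can only be covered
    by the geodesic [y x z] between two distinct vertices [y, z] of [B] that
    both lie in [S]; in particular [B] is contained in [S].  Since the midpoint
    of each assigned geodesic is unique, [(x, y) |-> (y, z)] is an injection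
    from [(P \ S) x B] into the off-diagonal pairs of [B x B], whence
    [|P \ S| < |B|] and [|P| < |S|].  So either [P] is contained in [S] or
    [|S| > |P|]; applied to both sides of [K_{n,m}] this gives the bounds. *)
From mathcomp Require Import all_boot zify.
From Stdlib Require Import ClassicalEpsilon.

Set Implicit Arguments.
Unset Strict Implicit.
Unset Printing Implicit Defensive.

(** The bound [k <= #|T|] covers the default value of [arg min], taken when no
    strong edge geodetic set exists. *)
Lemma sg_e_ge (T : finType) (e : rel T) (k : nat) :
  (forall S, strong_edge_geodetic e S -> k <= #|S|) -> k <= #|T| ->
  k <= sg_e e.
Proof.
move=> geoS_ge kT; rewrite /sg_e /arg_min /extremum.
case: pickP => [S /andP[+ _] | _] /=; last by rewrite cardsT.
rewrite /strong_edge_geodeticb.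
by case: excluded_middle_informative => // geoS _; apply: geoS_ge.
Qed.

Lemma complete_bipartite_setC (T : finType) (P : {set T}) (e : rel T) :
  (forall x y, e x y = ((x \in P) != (y \in P))) ->
  forall x y, e x y = ((x \in ~: P) != (y \in ~: P)).
Proof. by move=> eE x y; rewrite eE !inE; case: (x \in P); case: (y \in P). Qed.

Section CompleteBipartite.
Variables (T : finType) (P : {set T}) (e : rel T).
Hypothesis eE : forall x y, e x y = ((x \in P) != (y \in P)).
Variables (a b : T).
Hypotheses (aP : a \in P) (bNP : b \notin P).

Lemma shortest_path_size_le2 u v p : shortest_path e u v p -> size p <= 2.
Proof.
case=> _ /(_ (if e u v then [:: v] else [:: if u \in P then b else a; v])).
case euv: (e u v) => /(_ _)/leq_trans-> //; rewrite /walk /= ?euv eqxx ?andbT //.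
by move: euv; rewrite !eE; case: (u \in P); case: (v \in P); rewrite ?aP ?(negbTE bNP).
Qed.

Variable f : T -> T -> option (seq T).

Definition midpoint (y z : T) : option T :=
  let: (u, v) := if enum_rank y < enum_rank z then (y, z) else (z, y) in
  if f u v is Some [:: c; _] then Some c else None.

Variable S : {set T}.
Hypothesis f_geodesic : forall u v p, u \in S -> v \in S ->
  enum_rank u < enum_rank v -> f u v = Some p -> shortest_path e u v p.
Hypothesis f_cover : forall x y, e x y -> exists u v p,
  [/\ u \in S, v \in S, enum_rank u < enum_rank v, f u v = Some p
    & edge_on x y u p].

Lemma outside_edge_midpoint x y : x \in P :\: S -> y \notin P ->
  y \in S /\ exists z, [&& midpoint y z == Some x, z \notin P & z != y].
Proof.
rewrite inE => /andP[xNS xP] yNP.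
have /f_cover[u [v [p [uS vS uv fuv]]]] : e x y by rewrite eE xP yNP.
have geo := f_geodesic uS vS uv fuv.
have [/andP[pth /eqP pv] _] := geo; have := shortest_path_size_le2 geo.
have uNx : u != x by apply: contraNneq xNS => <-.
have vNx : v != x by apply: contraNneq xNS => <-.
have uNv : u != v by apply: contraTneq uv => ->; rewrite ltnn.
case: p {geo} pv pth fuv => [|c [|w [|? ?]]] //= -> pth fuv _.
  by rewrite /edge_on /= !xpair_eqE (negbTE uNx) (negbTE vNx) !andbF.
move: pth => /and3P[euc ecv _].
rewrite /edge_on /= !xpair_eqE (negbTE uNx) (negbTE vNx) /= !andbF !orbF.
case/orP=> /andP[/eqP yE /eqP cE]; subst.
- split=> //; exists v.
  rewrite /midpoint uv fuv eqxx eq_sym uNv andbT /=.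
  by move: ecv; rewrite eE xP.
- split=> //; exists u.
  rewrite /midpoint ltnNge (ltnW uv) /= fuv eqxx uNv andbT.
  by move: euc; rewrite eE xP; case: (u \in P).
Qed.

Lemma card_outside_lt x0 : x0 \in P :\: S -> #|P :\: S| < #|~: P|.
Proof.
move=> x0out.
pose through x y z := [&& midpoint y z == Some x, z \notin P & z != y].
pose g xy := (xy.2, odflt xy.2 [pick z | through xy.1 xy.2 z]).
have gP x y : x \in P :\: S -> y \in ~: P -> through x y (g (x, y)).2.
  move=> xout; rewrite inE => yNP; rewrite /g /=; case: pickP => [z //|none].
  have [_ [z zP]] := outside_edge_midpoint xout yNP.
  by have := none z; rewrite /= /through zP.
have g_inj : {in setX (P :\: S) (~: P) &, injective g}.
  move=> [x y] [x' y'] /[!in_setX] /andP[xout yB] /andP[x'out _] gE.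
  have yy' : y = y' := f_equal fst gE; subst y'.
  have /and3P[/eqP mx _ _] := gP _ _ xout yB.
  have /and3P[/eqP mx' _ _] := gP _ _ x'out yB.
  by move: mx'; rewrite -gE mx => -[->].
have g_proper : g @: setX (P :\: S) (~: P) \proper setX (~: P) (~: P).
  apply/properP; split.
    apply/subsetP => _ /imsetP[[x y] /[!in_setX] /andP[xout yB] ->].
    have /and3P[_ zNP _] := gP _ _ xout yB.
    by rewrite in_setX yB inE.
  exists (b, b); first by rewrite in_setX inE bNP.
  apply/imsetP => -[[x y] /[!in_setX] /andP[xout yB] gE].
  have /and3P[_ _] := gP _ _ xout yB.
  have yb : b = y := f_equal fst gE.
  by rewrite -gE /= -yb eqxx.
have := proper_card g_proper; rewrite card_in_imset // !cardsX ltn_mul2r.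
by case/andP.
Qed.

End CompleteBipartite.

Lemma complete_bipartite_geodetic_side (T : finType) (P : {set T}) (e : rel T)
    (a b : T) (S : {set T}) :
  (forall x y, e x y = ((x \in P) != (y \in P))) -> a \in P -> b \notin P ->
  strong_edge_geodetic e S -> P \subset S \/ #|P| < #|S|.
Proof.
move=> eE aP bNP [f [f_geodesic f_cover]].
have [PS | /subsetPn[x0 x0P x0NS]] := boolP (P \subset S); [by left | right].
have x0out : x0 \in P :\: S by rewrite inE x0NS.
have PC_S : ~: P \subset S.
  apply/subsetP => y; rewrite inE => yNP.
  by have [] := outside_edge_midpoint eE aP bNP f_geodesic f_cover x0out yNP.
have := card_outside_lt eE aP bNP f_geodesic f_cover x0out.
have SdP : S :\: P = ~: P by rewrite setDE; apply/setIidPr.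
by rewrite -(cardsID P S) SdP -(cardsID S P) setIC; lia.
Qed.

Section CompleteBipartiteGraph.
Variables n m : nat.

Definition Kbip_left : {set 'I_n + 'I_m} := inl @: [set: 'I_n].

Lemma Kbip_sides x y : Kbip n m x y = ((x \in Kbip_left) != (y \in Kbip_left)).
Proof.
have inl_left i : inl i \in Kbip_left by apply: imset_f.
have inr_left j : inr j \notin Kbip_left by apply/imsetP => -[].
by case: x y => [i|j] [i'|j']; rewrite /= ?inl_left ?(negbTE (inr_left _)).
Qed.

Lemma card_Kbip_left : #|Kbip_left| = n.
Proof. by rewrite card_imset ?cardsT ?card_ord //; apply: inl_inj. Qed.

Lemma card_Kbip_right : #|~: Kbip_left| = m.
Proof. by apply/eqP; rewrite cardsCs setCK card_sum !card_ord card_Kbip_left addKn. Qed.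

Lemma Kbip_geodetic_card (S : {set 'I_n + 'I_m}) : 0 < n -> 0 < m ->
  strong_edge_geodetic (Kbip n m) S ->
  n <= #|S| /\ [|| n < #|S|, m < #|S| | #|S| == n + m].
Proof.
move=> n_gt0 m_gt0 geoS.
have aL : inl (Ordinal n_gt0) \in Kbip_left by apply: imset_f.
have bNL : inr (Ordinal m_gt0) \notin Kbip_left by apply/imsetP => -[].
have [leftS | ltn_S] := complete_bipartite_geodetic_side Kbip_sides aL bNL geoS.
- have := subset_leq_card leftS; rewrite card_Kbip_left => le_nS.
  have bR : inr (Ordinal m_gt0) \in ~: Kbip_left by rewrite inE.
  have aNR : inl (Ordinal n_gt0) \notin ~: Kbip_left by rewrite inE aL.
  have [rightS | ltm_S] :=
    complete_bipartite_geodetic_side (complete_bipartite_setC Kbip_sides) bR aNR geoS.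
  + have -> : S = setT.
      by apply/eqP; rewrite eqEsubset subsetT -(setUCr Kbip_left) subUset leftS.
    by rewrite cardsT card_sum !card_ord leq_addr eqxx !orbT.
  + by rewrite card_Kbip_right in ltm_S; rewrite le_nS ltm_S orbT.
- by rewrite card_Kbip_left in ltn_S; rewrite ltn_S ltnW.
Qed.

End CompleteBipartiteGraph.

Theorem mainTheorem4 :
  (forall n m : nat, 2 <= m -> m <= n -> n <= sg_e (Kbip n m)) /\
  (forall n : nat, 2 <= n -> n.+1 <= sg_e (Kbip n n)).
Proof.
split=> [n m m2 mn | n n2].
- apply: sg_e_ge => [S geoS|]; last by rewrite card_sum !card_ord; lia.
  have n_gt0 : 0 < n by lia.
  have m_gt0 : 0 < m by lia.
  by have [] := Kbip_geodetic_card n_gt0 m_gt0 geoS.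
- apply: sg_e_ge => [S geoS|]; last by rewrite card_sum !card_ord; lia.
  have n_gt0 : 0 < n by lia.
  by have [_ /or3P[// | // | /eqP->]] := Kbip_geodetic_card n_gt0 n_gt0 geoS; lia.
Qed.
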